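(* Let $\{\tilde\alpha,\tilde\beta\}$ be a dual timelike - spacelike Mannheim pair in $ID_1^3$, with $\tilde\beta(s^* )=\tilde\alpha(s)+\lambda B(s)$ where $\lambda$ is a nonzero dual constant. If $\tau$ is the dual torsion of $\tilde\alpha$ and $P$, $Q$ are the dual curvature and dual torsion of $\tilde\beta$, then $$\tau=-\frac{P}{\lambda Q}.$$
   Context: Dual numbers: $ID=\{a+\varepsilon a^*: a,a^*\in\mathbb R\}$ with $\varepsilon^2=0$; differentiable functions extend by $f(a+\varepsilon a^* )=f(a)+\varepsilon a^* f'(a)$. $ID_1^3$ is $ID^3$ with dual Lorentzian inner product $\langle \vec A,\vec B\rangle=\langle\vec a,\vec b\rangle+\varepsilon(\langle\vec a,\vec b^*\rangle+\langle\vec a^*,\vec b\rangle)$, $\langle\vec a,\vec b\rangle=-a_1b_1+a_2b_2+a_3b_3$; dual spacelike/timelike vectors have $\langle A,A\rangle>0$ / $<0$. $\tilde\alpha$ is a dual timelike curve with dual arc length $s$ and Frenet frame $\{T,N,B\}$ ($T$ timelike, $N,B$ spacelike unit, mutually orthogonal): $T'=\kappa N$, $N'=\kappa T+\tau B$, $B'=-\tau N$. $\tilde\beta$ is a dual spacelike curve with dual timelike binormal, arc length $s^*$, frame $\{V_1,V_2,V_3\}$ ($V_1,V_2$ spacelike unit, $V_3$ timelike unit): $V_1'=PV_2$, $V_2'=-PV_1+QV_3$, $V_3'=QV_2$. A dual timelike - spacelike Mannheim pair means that under a correspondence $s\mapsto s^*$ the dual binormal line of $\tilde\alpha$ coincides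 with the dual principal normal line of $\tilde\beta$ at corresponding points. *)

From Stdlib Require Import Reals.
Open Scope R_scope.

(** * Dual numbers  a + eps a*,  eps^2 = 0 *)
Record dual := mkD { dre : R ; ddu : R }.

Definition dadd (x y : dual) : dual := mkD (dre x + dre y) (ddu x + ddu y).
Definition dopp (x : dual) : dual := mkD (- dre x) (- ddu x).
Definition dmul (x y : dual) : dual :=
  mkD (dre x * dre y) (dre x * ddu y + ddu x * dre y).
(* inverse of a dual number with nonzero real part: 1/(a + eps a1) = 1/a - eps a1/a^2
   (total function; only meaningful when dre x <> 0) *)
Definition dinv (x : dual) : dual := mkD (/ dre x) (- ddu x / (dre x * dre x)).
Definition ddiv (x y : dual) : dual := dmul x (dinv y).
Definition dzero : dual := mkD 0 0.
Definition done : dual := mkD 1 0.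

Record dvec := mkV { c1 : dual ; c2 : dual ; c3 : dual }.

Definition vadd (X Y : dvec) : dvec := mkV (dadd (c1 X) (c1 Y)) (dadd (c2 X) (c2 Y)) (dadd (c3 X) (c3 Y)).
Definition vscale (k : dual) (X : dvec) : dvec := mkV (dmul k (c1 X)) (dmul k (c2 X)) (dmul k (c3 X)).

(** dual Lorentzian inner product  <A,B> = -A1 B1 + A2 B2 + A3 B3  (dual arithmetic);
    its real part is <a,b> and its dual part is <a,b*> + <a*,b>. *)
Definition linner (X Y : dvec) : dual :=
  dadd (dopp (dmul (c1 X) (c1 Y))) (dadd (dmul (c2 X) (c2 Y)) (dmul (c3 X) (c3 Y))).

Definition ddet (X Y Z : dvec) : dual :=
  dadd (dmul (c1 X) (dadd (dmul (c2 Y) (c3 Z)) (dopp (dmul (c3 Y) (c2 Z)))))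
  (dadd (dopp (dmul (c2 X) (dadd (dmul (c1 Y) (c3 Z)) (dopp (dmul (c3 Y) (c1 Z))))))
        (dmul (c3 X) (dadd (dmul (c1 Y) (c2 Z)) (dopp (dmul (c2 Y) (c1 Z)))))).

Definition dual_deriv_at (f : R -> dual) (t : R) (y : dual) : Prop :=
  derivable_pt_lim (fun u => dre (f u)) t (dre y) /\
  derivable_pt_lim (fun u => ddu (f u)) t (ddu y).

Definition vec_deriv_at (X : R -> dvec) (t : R) (Y : dvec) : Prop :=
  dual_deriv_at (fun u => c1 (X u)) t (c1 Y) /\
  dual_deriv_at (fun u => c2 (X u)) t (c2 Y) /\
  dual_deriv_at (fun u => c3 (X u)) t (c3 Y).

(** The curve is given with an arbitrary real parameter t on (a,b); v t = ds/dt is the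
    derivative of the dual arc length s (dual number with positive real part), so that
    d/ds = (1/v) d/dt.  The Frenet equations T' = kappa N, N' = kappa T + tau B,
    B' = - tau N (' = d/ds) thus read d/dt T = v kappa N, etc. *)
Definition timelike_frenet (alpha : R -> dvec) (a b : R)
  (v kappa tau : R -> dual) (T N B : R -> dvec) : Prop :=
  forall t, a < t < b ->
    0 < dre (v t) /\
    vec_deriv_at alpha t (vscale (v t) (T t)) /\
    vec_deriv_at T t (vscale (dmul (v t) (kappa t)) (N t)) /\
    vec_deriv_at N t (vscale (v t) (vadd (vscale (kappa t) (T t)) (vscale (tau t) (B t)))) /\
    vec_deriv_at B t (vscale (dopp (dmul (v t) (tau t))) (N t)) /\
    linner (T t) (T t) = dopp done /\
    linner (N t) (N t) = done /\
    linner (B t) (B t) = done /\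
    linner (T t) (N t) = dzero /\
    linner (T t) (B t) = dzero /\
    linner (N t) (B t) = dzero /\
    ddet (T t) (N t) (B t) = done.

(** * Dual spacelike curve with dual timelike binormal, positively oriented frame
    {V1,V2,V3} (V1, V2 spacelike, V3 timelike); w t = ds*/dt; Frenet equations
    V1' = P V2, V2' = -P V1 + Q V3, V3' = Q V2 with ' = d/ds*. *)
Definition spacelike_tb_frenet (beta : R -> dvec) (a b : R)
  (w P Q : R -> dual) (V1 V2 V3 : R -> dvec) : Prop :=
  forall t, a < t < b ->
    0 < dre (w t) /\
    vec_deriv_at beta t (vscale (w t) (V1 t)) /\
    vec_deriv_at V1 t (vscale (dmul (w t) (P t)) (V2 t)) /\
    vec_deriv_at V2 t (vscale (w t) (vadd (vscale (dopp (P t)) (V1 t)) (vscale (Q t) (V3 t)))) /\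
    vec_deriv_at V3 t (vscale (dmul (w t) (Q t)) (V2 t)) /\
    linner (V1 t) (V1 t) = done /\
    linner (V2 t) (V2 t) = done /\
    linner (V3 t) (V3 t) = dopp done /\
    linner (V1 t) (V2 t) = dzero /\
    linner (V1 t) (V3 t) = dzero /\
    linner (V2 t) (V3 t) = dzero /\
    ddet (V1 t) (V2 t) (V3 t) = done.

(* Differentiating [beta = alpha + lambda B] and [V2 = B] gives, with [v = ds/dt] and
   [w = ds*/dt],
     w V1 = v T - lambda v tau N    and    w (-P V1 + Q V3) = - v tau N.
   Taking the norm of the first, the inner product of the second with V1, and the
   determinant of the frame {V1, V2, V3} yields
     w^2 = v^2 (lambda^2 tau^2 - 1),   w^2 P = - lambda v^2 tau^2,   w^2 Q = v^2 tau,
   so P = - lambda tau Q, and lambda Q is invertible because of the first identity. *)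

From Stdlib Require Import Reals Psatz.
Open Scope R_scope.

Lemma dual_eq (x y : dual) : dre x = dre y -> ddu x = ddu y -> x = y.
Proof. destruct x, y; simpl; intros; subst; reflexivity. Qed.

Definition dsub (x y : dual) : dual := dadd x (dopp y).

Lemma dual_ring_theory : ring_theory dzero done dadd dmul dsub dopp (@eq dual).
Proof.
  constructor; intros; apply dual_eq; unfold dadd, dmul, dopp, dsub, dzero, done;
    simpl; ring.
Qed.
Add Ring dual_ring : dual_ring_theory.

Declare Scope dual_scope.
Delimit Scope dual_scope with D.
Notation "x + y" := (dadd x y) : dual_scope.
Notation "x - y" := (dsub x y) : dual_scope.
Notation "- x" := (dopp x) : dual_scope.
Notation "x * y" := (dmul x y) : dual_scope.
Notation "0" := dzero : dual_scope.
Notation "1" := done : dual_scope.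

Lemma dmulVd (u : dual) : dre u <> 0 -> (dinv u * u = 1)%D.
Proof.
  destruct u as [u1 u2]; simpl; intro Hu.
  apply dual_eq; simpl; field; exact Hu.
Qed.

Lemma dmulI (u x y : dual) : dre u <> 0 -> (u * x = u * y)%D -> x = y.
Proof.
  intros Hu E.
  transitivity (dinv u * u * x)%D; [rewrite (dmulVd u Hu); ring|].
  transitivity (dinv u * (u * x))%D; [ring|].
  rewrite E; transitivity (dinv u * u * y)%D; [ring|].
  rewrite (dmulVd u Hu); ring.
Qed.

Lemma dual_deriv_at_unique (f g : R -> dual) a b t df dg : a < t < b ->
  (forall u, a < u < b -> f u = g u) ->
  dual_deriv_at f t df -> dual_deriv_at g t dg -> df = dg.
Proof.
  intros Ht Efg [Df1 Df2] [Dg1 Dg2].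
  apply dual_eq.
  - apply (uniqueness_limite (fun u => dre (g u)) t); [|exact Dg1].
    apply (derivable_pt_lim_locally_ext (fun u => dre (f u)) _ t a b _ Ht); [|exact Df1].
    intros u Hu; rewrite (Efg u Hu); reflexivity.
  - apply (uniqueness_limite (fun u => ddu (g u)) t); [|exact Dg2].
    apply (derivable_pt_lim_locally_ext (fun u => ddu (f u)) _ t a b _ Ht); [|exact Df2].
    intros u Hu; rewrite (Efg u Hu); reflexivity.
Qed.

Lemma vec_deriv_at_unique (X Y : R -> dvec) a b t DX DY : a < t < b ->
  (forall u, a < u < b -> X u = Y u) ->
  vec_deriv_at X t DX -> vec_deriv_at Y t DY -> DX = DY.
Proof.
  intros Ht EXY [DX1 [DX2 DX3]] [DY1 [DY2 DY3]].
  destruct DX, DY; simpl in *; f_equal;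
    (eapply dual_deriv_at_unique; [exact Ht| |eassumption|eassumption]);
    intros u Hu; simpl; rewrite (EXY u Hu); reflexivity.
Qed.

Lemma dual_deriv_at_add_scale (f g : R -> dual) k t df dg :
  dual_deriv_at f t df -> dual_deriv_at g t dg ->
  dual_deriv_at (fun u => (f u + k * g u)%D) t (df + k * dg)%D.
Proof.
  intros [Df1 Df2] [Dg1 Dg2]; split; simpl.
  - apply derivable_pt_lim_plus; [|apply derivable_pt_lim_scal]; assumption.
  - apply derivable_pt_lim_plus; [|apply derivable_pt_lim_plus];
      try apply derivable_pt_lim_scal; assumption.
Qed.

Lemma vec_deriv_at_add_scale (X Y : R -> dvec) k t DX DY :
  vec_deriv_at X t DX -> vec_deriv_at Y t DY ->
  vec_deriv_at (fun u => vadd (X u) (vscale k (Y u))) t (vadd DX (vscale k DY)).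
Proof.
  intros [DX1 [DX2 DX3]] [DY1 [DY2 DY3]].
  split; [|split]; apply dual_deriv_at_add_scale; assumption.
Qed.

Lemma linnerC X Y : linner X Y = linner Y X.
Proof. destruct X, Y; unfold linner; simpl; ring. Qed.

Lemma linnerDl X Y Z : linner (vadd X Y) Z = (linner X Z + linner Y Z)%D.
Proof. destruct X, Y, Z; unfold linner, vadd; simpl; ring. Qed.

Lemma linnerDr X Y Z : linner Z (vadd X Y) = (linner Z X + linner Z Y)%D.
Proof. destruct X, Y, Z; unfold linner, vadd; simpl; ring. Qed.

Lemma linnerZl k X Y : linner (vscale k X) Y = (k * linner X Y)%D.
Proof. destruct X, Y; unfold linner, vscale; simpl; ring. Qed.

Lemma linnerZr k X Y : linner X (vscale k Y) = (k * linner X Y)%D.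
Proof. destruct X, Y; unfold linner, vscale; simpl; ring. Qed.

Lemma vscaleA k l X : vscale k (vscale l X) = vscale (k * l)%D X.
Proof. destruct X; unfold vscale; simpl; f_equal; ring. Qed.

Lemma ddet_Z1_shear3 k m p q X Y Z :
  ddet (vscale k X) Y (vscale m (vadd (vscale p X) (vscale q Z)))
  = (k * m * q * ddet X Y Z)%D.
Proof. destruct X, Y, Z; unfold ddet, vscale, vadd; simpl; ring. Qed.

Lemma ddet_comb1_Z3_swap k l m X Y Z :
  ddet (vadd (vscale k X) (vscale l Y)) Z (vscale m Y) = (- (k * m * ddet X Y Z))%D.
Proof. destruct X, Y, Z; unfold ddet, vscale, vadd; simpl; ring. Qed.

Ltac linner_expand E :=
  repeat (rewrite linnerDl in E || rewrite linnerDr in E ||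
          rewrite linnerZl in E || rewrite linnerZr in E).

Ltac ring_from E := etransitivity; [|etransitivity; [exact E|]]; ring.

Section MannheimFrames.

Context {T N B V1 V3 : dvec} {v w tau lambda P Q : dual}.

Hypotheses (TT : linner T T = dopp done) (NN : linner N N = 1%D)
  (TN : linner T N = 0%D) (TNB : ddet T N B = 1%D)
  (V11 : linner V1 V1 = 1%D) (V13 : linner V1 V3 = 0%D) (V1BV3 : ddet V1 B V3 = 1%D).

Hypothesis tangent_rel :
  vscale w V1 = vadd (vscale v T) (vscale lambda (vscale (- (v * tau))%D N)).
Hypothesis normal_rel :
  vscale w (vadd (vscale (- P)%D V1) (vscale Q V3)) = vscale (- (v * tau))%D N.

Lemma mannheim_speed_rel : (w * w = v * v * (lambda * lambda * tau * tau - 1))%D.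
Proof.
  pose proof (f_equal (fun X => linner X X) tangent_rel) as E; simpl in E.
  linner_expand E; rewrite (linnerC N T), V11, TT, NN, TN in E.
  ring_from E.
Qed.

Lemma mannheim_curvature_rel : (w * w * P = - (lambda * v * v * tau * tau))%D.
Proof.
  pose proof (f_equal (fun X => linner X V1) normal_rel) as EV1; simpl in EV1.
  pose proof (f_equal (fun X => linner X N) tangent_rel) as EN; simpl in EN.
  linner_expand EV1; rewrite (linnerC V3 V1), (linnerC N V1), V11, V13 in EV1.
  linner_expand EN; rewrite NN, TN in EN.
  assert (HP : (w * - P = - (v * tau) * linner V1 N)%D) by ring_from EV1.
  assert (HN : (w * linner V1 N = - (lambda * (v * tau)))%D) by ring_from EN.
  transitivity (- (w * (w * - P)))%D; [ring|].
  rewrite HP; transitivity (v * tau * (w * linner V1 N))%D; [ring|].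
  rewrite HN; ring.
Qed.

Lemma mannheim_torsion_rel : (w * w * Q = v * v * tau)%D.
Proof.
  pose proof (f_equal (fun X => ddet (vscale w V1) B X) normal_rel) as E; simpl in E.
  rewrite ddet_Z1_shear3, V1BV3, tangent_rel, vscaleA, ddet_comb1_Z3_swap, TNB in E.
  ring_from E.
Qed.

End MannheimFrames.

Lemma mannheim_lambda_torsion_unit (v w tau lambda Q : dual) : 0 < dre v ->
  (w * w = v * v * (lambda * lambda * tau * tau - 1))%D ->
  (w * w * Q = v * v * tau)%D ->
  dre (lambda * Q)%D <> 0.
Proof.
  intros Hv Hspeed HQ HlQ.
  apply (f_equal dre) in Hspeed; apply (f_equal dre) in HQ; simpl in Hspeed, HQ, HlQ.
  assert (Htl : dre tau * dre lambda = 0).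
  { assert (Hvtl : dre v * dre v * (dre tau * dre lambda) = 0).
    { transitivity (dre v * dre v * dre tau * dre lambda); [ring|].
      rewrite <- HQ; transitivity (dre w * dre w * (dre lambda * dre Q)); [ring|].
      rewrite HlQ; ring. }
    destruct (Rmult_integral _ _ Hvtl) as [H|H]; [nra|exact H]. }
  assert (dre lambda * dre lambda * dre tau * dre tau = 0)
    by (transitivity ((dre tau * dre lambda) * (dre tau * dre lambda)); [ring|];
        rewrite Htl; ring).
  nra.
Qed.

Lemma mannheim_torsion_eq (v w tau lambda P Q : dual) : 0 < dre v -> 0 < dre w ->
  (w * w = v * v * (lambda * lambda * tau * tau - 1))%D ->
  (w * w * P = - (lambda * v * v * tau * tau))%D ->
  (w * w * Q = v * v * tau)%D ->
  tau = dopp (ddiv P (dmul lambda Q)).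
Proof.
  intros Hv Hw Hspeed HP HQ.
  pose proof (mannheim_lambda_torsion_unit v w tau lambda Q Hv Hspeed HQ) as HlQ.
  assert (EP : P = (- (lambda * tau * Q))%D).
  { apply (dmulI (w * w)%D); [simpl; nra|].
    rewrite HP; transitivity (- (lambda * tau) * (w * w * Q))%D; [|ring].
    rewrite HQ; ring. }
  rewrite EP; unfold ddiv.
  transitivity (tau * (dinv (lambda * Q) * (lambda * Q)))%D; [rewrite (dmulVd _ HlQ)|]; ring.
Qed.

Theorem theorem3p3
  (a b : R) (alpha beta : R -> dvec)
  (v kappa tau : R -> dual) (T N B : R -> dvec)
  (w P Q : R -> dual) (V1 V2 V3 : R -> dvec) (lambda : dual) :
  a < b ->
  timelike_frenet alpha a b v kappa tau T N B ->
  spacelike_tb_frenet beta a b w P Q V1 V2 V3 ->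
  lambda <> dzero ->
  (forall t, a < t < b ->
     V2 t = B t /\ beta t = vadd (alpha t) (vscale lambda (B t))) ->
  forall t, a < t < b ->
    tau t = dopp (ddiv (P t) (dmul lambda (Q t))).
Proof.
  intros _ Halpha Hbeta _ Hpair t Ht.
  destruct (Halpha t Ht) as [Hv [Dalpha [_ [_ [DB [TT [NN [_ [TN [_ [_ TNB]]]]]]]]]]].
  destruct (Hbeta t Ht)
    as [Hw [Dbeta [_ [DV2 [_ [V11 [_ [_ [_ [V13 [_ V123]]]]]]]]]]].
  destruct (Hpair t Ht) as [V2B _].
  assert (tangent_rel : vscale (w t) (V1 t) =
    vadd (vscale (v t) (T t)) (vscale lambda (vscale (- (v t * tau t))%D (N t)))).
  { apply (vec_deriv_at_unique beta (fun u => vadd (alpha u) (vscale lambda (B u))) a b t);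
      [exact Ht|apply Hpair|exact Dbeta|apply vec_deriv_at_add_scale; assumption]. }
  assert (normal_rel : vscale (w t) (vadd (vscale (- P t)%D (V1 t)) (vscale (Q t) (V3 t)))
                       = vscale (- (v t * tau t))%D (N t)).
  { apply (vec_deriv_at_unique V2 B a b t); [exact Ht|apply Hpair|exact DV2|exact DB]. }
  rewrite V2B in V123.
  apply mannheim_torsion_eq with (v := v t) (w := w t); [exact Hv|exact Hw| | |].
  - exact (mannheim_speed_rel TT NN TN V11 tangent_rel).
  - exact (mannheim_curvature_rel NN TN V11 V13 tangent_rel normal_rel).
  - exact (mannheim_torsion_rel TNB V123 tangent_rel normal_rel).
Qed.
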